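(* Assume Assumption (I), and let $(L_k,u_k)$ be a sequence generated by Algorithm A (with $(\epsilon_k)$ monotonically decreasing). Then for all $k$, \[ \Phi_{\epsilon_{k+1}}(u_{k+1})+\frac\alpha2\|u_{k+1}-u_k\|_V^2+\beta\int_\Omega\psi_{\epsilon_k}'(u_k^2)(u_{k+1}-u_k)^2\,dx\le\Phi_{\epsilon_k}(u_k). \]
   Context: Standing assumptions: $\Omega\subset\mathbb R^d$ bounded Lipschitz domain; $V$ real Hilbert space with inner product $\langle\cdot,\cdot\rangle_V$, $V\subset L^2(\Omega)$ with compact and dense embedding; $V^*$ dual. $F:V\to\mathbb R$ weakly lower semicontinuous, bounded below by an affine function, continuously Fréchet differentiable. $\alpha>0$, $\beta>0$, $p\in(0,1)$. Assumption (I): the standing assumptions hold; $F'$ is completely continuous ($u_n\rightharpoonup u$ in $V$ implies $F'(u_n)\to F'(u)$ in $V^*$); and $F':V\to V^*$ is Lipschitz continuous on bounded sets. For $\epsilon>0$, $\psi_\epsilon(t)=\frac p2\frac{t}{\epsilon^{2-p}}+(1-\frac p2)\epsilon^p$ if $t\in[0,\epsilon^2)$, $\psi_\epsilon(t)=t^{p/2}$ if $t\ge\epsilon^2$, $\psi_\epsilon'(t)=\frac p2\min(\epsilon^{p-2},t^{(p-2)/2})$. $G_\epsilon(u)=\int_\Omega\psi_\epsilon(|u|^2)dx$ and $\Phi_\epsilon(u)=F(u)+\frac\alpha2\|u\|_V^2+\beta G_\epsilon(u)$. Algorithm A: choose a monotonically decreasing sequence $\epsilon_k\searrow0$, constants $\gamma>1$,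 $\tilde L>0$, and $u_0\in V$. Given $u_k$, for $L\ge0$ let problem (Q$_{k,L}$) be $\min_{u\in V} F(u_k)+F'(u_k)(u-u_k)+\frac L2\|u-u_k\|_V^2+\frac\alpha2\|u\|_V^2+\beta\int_\Omega\big[\psi_{\epsilon_k}(u_k^2)+\psi_{\epsilon_k}'(u_k^2)(u^2-u_k^2)\big]dx$ (strongly convex, unique minimizer), and let (D$_{k,L}$) be the condition $F(u_{k+1})\le F(u_k)+F'(u_k)(u_{k+1}-u_k)+L\|u_{k+1}-u_k\|_V^2$ for its minimizer $u_{k+1}$. $L_k$ is the smallest $L\in\{0\}\cup\{\tilde L\gamma^l:l\ge0\}$ for which (D$_{k,L}$) holds, and $u_{k+1}$ is the corresponding minimizer; then $k\mapsto k+1$. *)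

From HB Require Import structures.
From mathcomp Require Import all_boot all_order all_algebra.
From mathcomp Require Import all_classical all_reals all_analysis.
Set Implicit Arguments. Unset Strict Implicit. Unset Printing Implicit Defensive.
Import Order.TTheory GRing.Theory Num.Theory.
Import numFieldNormedType.Exports.
Local Open Scope classical_set_scope.
Local Open Scope ring_scope.

(* Geometry of the domain Omega in R^d, d = n.+1.                            *)
(* Points of R^d are d-tuples (this carries the product = Borel sigma-       *)
(* algebra of the library); for topology we view them as row vectors.       *)
Section Geometry.
Variables (R : realType) (n : nat).

Definition tvec (x : (n.+1).-tuple R) : 'rV[R]_(n.+1) := \row_i tnth x i.

Definition last_coord (z : 'rV[R]_(n.+1)) : R := z 0 ord_max.
Definition first_coords (z : 'rV[R]_(n.+1)) : 'rV[R]_n :=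
  \row_(j < n) z 0 (widen_ord (leqnSn n) j).

Definition orthogonal_mx (Q : 'M[R]_(n.+1)) : Prop := Q *m Q^T = 1%:M.

Definition lipschitz_boundary (O : set 'rV[R]_(n.+1)) : Prop :=
  forall x, closure O x -> ~ O x ->
    exists r : R, 0 < r /\
    exists Q : 'M[R]_(n.+1), orthogonal_mx Q /\
    exists gam : 'rV[R]_n -> R,
      (exists K : R, forall a b, `|gam a - gam b| <= K * `|a - b|) /\
      (forall y, ball x r y ->
        (O y <-> last_coord ((y - x) *m Q) < gam (first_coords ((y - x) *m Q)))).

Definition bounded_lipschitz_domain (Om : set ((n.+1).-tuple R)) : Prop :=
  let O := tvec @` Om in
  [/\ O !=set0, open O, connected O, bounded_set O & lipschitz_boundary O].

(* mu is Lebesgue measure on the (Borel) sets of R^d: it gives every box its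
   volume (this characterises it uniquely). *)
Definition is_lebesgue_measure (mu : set ((n.+1).-tuple R) -> \bar R) : Prop :=
  forall a b : (n.+1).-tuple R,
    mu [set x | forall i, tnth a i < tnth x i <= tnth b i] =
    (\prod_i Num.max (tnth b i - tnth a i) 0)%:E.

End Geometry.

Section Functional.
Variables (R : realType) (V : completeNormedModType R).

(* ip is an inner product inducing the norm of V (so V is a real Hilbert
   space, being complete) *)
Definition is_inner_product (ip : V -> V -> R) : Prop :=
  [/\ forall a u v w, ip (a *: u + v) w = a * ip u w + ip v w,
      forall u v, ip u v = ip v u &
      forall v, `|v| ^+ 2 = ip v v].

Definition is_dual (phi : V -> R) : Prop :=
  (forall a u v, phi (a *: u + v) = a * phi u + phi v) /\
  exists C : R, forall v, `|phi v| <= C * `|v|.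

Definition dual_dist_le (phi psi : V -> R) (e : R) : Prop :=
  forall v, `|phi v - psi v| <= e * `|v|.

Definition weak_cvg (u : nat -> V) (x : V) : Prop :=
  forall phi, is_dual phi -> (phi \o u) @ \oo --> phi x.

Definition standing_F (F : V -> R) (F' : V -> V -> R) : Prop :=
  [/\
      (forall (u : nat -> V) x, weak_cvg u x ->
         ((F x)%:E <= limn_einf (fun k => (F (u k))%:E))%E),
      (exists phi c, is_dual phi /\ forall v, phi v + c <= F v),
      (forall u, is_dual (F' u) /\
         forall e : R, 0 < e -> exists delta : R, 0 < delta /\
           forall h, `|h| < delta -> `|F (u + h) - F u - F' u h| <= e * `|h|) &
      (forall u (e : R), 0 < e -> exists delta : R, 0 < delta /\
         forall w, `|w - u| < delta -> dual_dist_le (F' w) (F' u) e)].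

Definition assumption_I_F (F' : V -> V -> R) : Prop :=
  (forall (u : nat -> V) x, weak_cvg u x ->
     forall e : R, 0 < e -> \forall k \near \oo, dual_dist_le (F' (u k)) (F' x) e) /\
  (forall r : R, exists C : R, forall u w, `|u| <= r -> `|w| <= r ->
     dual_dist_le (F' u) (F' w) (C * `|u - w|)).

End Functional.

Section Embedding.
Variables (R : realType) (n : nat).
Variable mu : {measure set ((n.+1).-tuple R) -> \bar R}.
Variable Om : set ((n.+1).-tuple R).

Definition sqnorm_L2 (f : (n.+1).-tuple R -> R) : \bar R :=
  (\int[mu]_(x in Om) ((f x) ^+ 2)%:E)%E.

Definition in_L2 (f : (n.+1).-tuple R -> R) : Prop :=
  measurable_fun Om f /\ (sqnorm_L2 f < +oo)%E.

Variable V : completeNormedModType R.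

(* iota v is a representative of the element v of V viewed in L^2(Omega) *)
Definition compact_dense_embedding (iota : V -> (n.+1).-tuple R -> R) : Prop :=
  [/\
      (forall v, in_L2 (iota v)),
      (forall a u v, {ae mu, forall x, Om x ->
          iota (a *: u + v) x = a * iota u x + iota v x}),
      (forall v, {ae mu, forall x, Om x -> iota v x = 0} -> v = 0),
      ((exists C : R, forall v, (sqnorm_L2 (iota v) <= (C * `|v| ^+ 2)%:E)%E) /\
       (forall u : nat -> V, (exists M : R, forall k, `|u k| <= M) ->
         exists (phi : nat -> nat) (f : (n.+1).-tuple R -> R),
           {homo phi : i j / (i < j)%N} /\ in_L2 f /\
           (fun k => sqnorm_L2 (fun x => iota (u (phi k)) x - f x)) @ \oo --> 0%E)) &
      (forall f, in_L2 f -> forall e : R, 0 < e ->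
         exists v, (sqnorm_L2 (fun x => (iota v x - f x)%R) < e%:E)%E)].

End Embedding.

Section Psi.
Variable R : realType.

Definition psi (p eps t : R) : R :=
  if t < eps ^+ 2 then p / 2 * t / (eps `^ (2 - p)) + (1 - p / 2) * eps `^ p
  else t `^ (p / 2).

(* psi' = p/2 * min(eps^(p-2), t^((p-2)/2)); for t < eps^2 the minimum is
   eps^(p-2) (with t^((p-2)/2) = +oo at t = 0) *)
Definition dpsi (p eps t : R) : R :=
  if t < eps ^+ 2 then p / 2 * eps `^ (p - 2) else p / 2 * t `^ ((p - 2) / 2).

End Psi.

Section Algorithm.
Variables (R : realType) (n : nat).
Variable mu : {measure set ((n.+1).-tuple R) -> \bar R}.
Variable Om : set ((n.+1).-tuple R).
Variables (V : completeNormedModType R) (iota : V -> (n.+1).-tuple R -> R).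
Variables (F : V -> R) (F' : V -> V -> R) (alpha beta p : R).

Definition G_eps (eps : R) (v : V) : R :=
  Rintegral mu Om (fun x => psi p eps (iota v x ^+ 2)).

Definition Phi_eps (eps : R) (v : V) : R :=
  F v + alpha / 2 * `|v| ^+ 2 + beta * G_eps eps v.

Definition Q_obj (epsk : R) (uk : V) (L : R) (w : V) : R :=
  F uk + F' uk (w - uk) + L / 2 * `|w - uk| ^+ 2 + alpha / 2 * `|w| ^+ 2
  + beta * Rintegral mu Om (fun x =>
      psi p epsk (iota uk x ^+ 2)
      + dpsi p epsk (iota uk x ^+ 2) * (iota w x ^+ 2 - iota uk x ^+ 2)).

Definition D_cond (uk : V) (L : R) (w : V) : Prop :=
  F w <= F uk + F' uk (w - uk) + L * `|w - uk| ^+ 2.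

Definition is_minimizer (f : V -> R) (w : V) : Prop := forall v, f w <= f v.

Definition L_candidate (gam Lt L : R) : Prop :=
  L = 0 \/ exists l : nat, L = Lt * gam ^+ l.

Definition algorithmA (eps : nat -> R) (gam Lt : R) (Lk : nat -> R) (u : nat -> V)
  : Prop :=
  forall k,
    [/\ L_candidate gam Lt (Lk k),
        is_minimizer (Q_obj (eps k) (u k) (Lk k)) (u k.+1),
        D_cond (u k) (Lk k) (u k.+1) &
        forall L, L_candidate gam Lt L -> L < Lk k ->
          forall w, is_minimizer (Q_obj (eps k) (u k) L) w -> ~ D_cond (u k) L w].

End Algorithm.

From HB Require Import structures.
From mathcomp Require Import all_boot all_order all_algebra.
From mathcomp Require Import all_classical all_reals all_analysis.
From mathcomp Require Import ring lra measurable_realfun.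
Import Order.TTheory GRing.Theory Num.Theory.
Import numFieldNormedType.Exports.
Local Open Scope classical_set_scope.
Local Open Scope ring_scope.

(* psi_eps(t) is the value at t of the tangent to the concave map s |-> s^(p/2)
   at max(eps^2, t).  Hence psi_eps is concave, lies below each of its
   linearisations, and increases with eps; together with (D_{k,L}) this makes
   the value of (Q_{k,L}) at u_{k+1} dominate
   Phi_{eps_{k+1}}(u_{k+1}) - L/2 ||u_{k+1} - u_k||^2.
   On the other hand (Q_{k,L}) restricted to the line through u_{k+1} and u_k
   is a quadratic polynomial, minimal at u_{k+1}; so its linear coefficient
   vanishes and its value at u_k, which is Phi_{eps_k}(u_k), exceeds its value
   at u_{k+1} by exactly the quadratic coefficient
   (L + alpha)/2 ||u_k - u_{k+1}||^2 + beta int psi'(u_k^2)(u_{k+1} - u_k)^2. *)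

Section PowRTangent.
Context {R : realType}.
Variable q : R.
Hypotheses (q_gt0 : 0 < q) (q_lt1 : q < 1).
Implicit Types x y s t : R.

Definition powR_tangent x s : R := x `^ q + q * x `^ (q - 1) * (s - x).

Lemma powR_tangentE x s t :
  powR_tangent x t + q * x `^ (q - 1) * (s - t) = powR_tangent x s.
Proof. rewrite /powR_tangent; ring. Qed.

Lemma powR_le_tangent x y : 0 < x -> 0 <= y -> y `^ q <= powR_tangent x y.
Proof.
move=> x0 y0; have yx0 : 0 <= y / x := divr_ge0 y0 (ltW x0).
(* Young's inequality with the conjugate exponents 1/q and 1/(1 - q). *)
have young : (y / x) `^ q <= q * (y / x) + (1 - q).
  have := @conjugate_powR R ((y / x) `^ q) 1 q^-1 (1 - q)^-1 (powR_ge0 _ _) ler01.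
  rewrite invr_gt0 q_gt0 invr_gt0 subr_gt0 q_lt1 !invrK => /(_ isT isT).
  rewrite addrC subrK => /(_ erefl).
  by rewrite mulr1 -powRrM mulfV ?gt_eqF// powRr1// powR1 mul1r [_ * q]mulrC.
have -> : y `^ q = (y / x) `^ q * x `^ q.
  by rewrite -powRM ?yx0 ?(ltW x0) // divfK ?gt_eqF.
have -> : powR_tangent x y = (q * (y / x) + (1 - q)) * x `^ q.
  by rewrite /powR_tangent -(mulr_powRB1 (ltW x0) q_gt0); field; rewrite gt_eqF.
by apply: ler_wpM2r => //; exact: powR_ge0.
Qed.

Lemma powR_pred_nonincr x y : 0 < y -> y <= x -> x `^ (q - 1) <= y `^ (q - 1).
Proof.
move=> y0 yx; have x0 : 0 < x by apply: lt_le_trans yx.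
rewrite -(opprB 1 q) !powRN lef_pV2 ?posrE ?powR_gt0//.
by apply: ge0_ler_powR => //; rewrite ?nnegrE ?subr_ge0; exact: ltW.
Qed.

Lemma powR_tangent_le x y s : 0 < y -> y <= x -> s <= y ->
  powR_tangent y s <= powR_tangent x s.
Proof.
move=> y0 yx sy; have x0 : 0 < x by apply: lt_le_trans yx.
rewrite -(powR_tangentE x s y) {1}/powR_tangent.
apply: lerD; first exact: powR_le_tangent (ltW y0).
rewrite -!mulrA ler_pM2l//; apply: ler_wnM2r; first by rewrite subr_le0.
exact: powR_pred_nonincr.
Qed.
End PowRTangent.

Section Psi.
Context {R : realType}.
Variable p : R.
Hypotheses (p_gt0 : 0 < p) (p_lt1 : p < 1).
Implicit Types e s t : R.

Let q_gt0 : 0 < p / 2. Proof. by rewrite divr_gt0. Qed.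
Let q_lt1 : p / 2 < 1. Proof. by rewrite ltr_pdivrMr// mul1r (lt_trans p_lt1)// ltr1n. Qed.

Lemma powR_sqr e a : 0 < e -> (e ^+ 2) `^ a = e `^ (2 * a).
Proof. by move=> e0; rewrite -powR_mulrn ?ltW// -powRrM. Qed.

Lemma sqr_max_gt0 e t : 0 < e -> 0 < Num.max (e ^+ 2) t.
Proof. by move=> e0; rewrite lt_max exprn_gt0. Qed.

Lemma psi_tangentE e t : 0 < e ->
  psi p e t = powR_tangent (p / 2) (Num.max (e ^+ 2) t) t.
Proof.
move=> e0; rewrite /psi /powR_tangent; case: ltP => te; last first.
  by rewrite subrr mulr0 addr0.
rewrite !powR_sqr// (_ : 2 * (p / 2) = p); last by field.
rewrite (_ : 2 * (p / 2 - 1) = p - 2); last by field.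
have -> : e `^ p = e `^ (p - 2) * e ^+ 2.
  by rewrite -powR_mulrn ?ltW// -powRD ?subrK// gt_eqF// implybT.
rewrite -(opprB 2 p) powRN; field.
by rewrite gt_eqF// powR_gt0.
Qed.

Lemma dpsi_tangentE e t : 0 < e ->
  dpsi p e t = p / 2 * Num.max (e ^+ 2) t `^ (p / 2 - 1).
Proof.
move=> e0; rewrite /dpsi; case: ltP => te.
  by rewrite powR_sqr// (_ : 2 * (p / 2 - 1) = p - 2)//; field.
by rewrite (_ : (p - 2) / 2 = p / 2 - 1)//; field.
Qed.

Lemma psi_le_linearization e s t : 0 < e -> 0 <= s -> 0 <= t ->
  psi p e s <= psi p e t + dpsi p e t * (s - t).
Proof.
move=> e0 s0 t0; rewrite !psi_tangentE// dpsi_tangentE// powR_tangentE.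
have [se|es] := ltP s (e ^+ 2).
  apply: powR_tangent_le => //; first by rewrite exprn_gt0.
    by rewrite le_max lexx.
  exact: ltW.
rewrite {1}/powR_tangent subrr mulr0 addr0.
exact: powR_le_tangent _ q_gt0 q_lt1 _ _ (sqr_max_gt0 _ _ e0) s0.
Qed.

Lemma psi_le_eps e e' s : 0 < e' -> e' <= e -> 0 <= s -> psi p e' s <= psi p e s.
Proof.
move=> e'0 ee s0; have e0 : 0 < e by apply: lt_le_trans ee.
rewrite !psi_tangentE//; apply: powR_tangent_le => //.
- exact: sqr_max_gt0.
- by apply: le_max2 => //; rewrite lerXn2r// nnegrE ltW.
- by rewrite le_max lexx orbT.
Qed.

Lemma psi_ge0 e t : 0 < e -> 0 <= t -> 0 <= psi p e t.
Proof.
move=> e0 t0; rewrite psi_tangentE//.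
exact: le_trans (powR_ge0 _ _) (powR_le_tangent _ q_gt0 q_lt1 _ _ (sqr_max_gt0 _ _ e0) t0).
Qed.

Lemma dpsi_ge0 e t : 0 < e -> 0 <= dpsi p e t.
Proof. by move=> e0; rewrite dpsi_tangentE// mulr_ge0 ?powR_ge0// ltW. Qed.

Lemma dpsi_le_dpsi0 e t : 0 < e -> 0 <= t -> dpsi p e t <= dpsi p e 0.
Proof.
move=> e0 t0; rewrite !dpsi_tangentE// ler_pM2l//.
apply: powR_pred_nonincr => //; first exact: sqr_max_gt0.
exact: le_max2.
Qed.

End Psi.

Lemma measurable_psi {R : realType} (p e : R) : measurable_fun setT (psi p e).
Proof.
apply: measurable_fun_ifT.
- by apply: measurable_fun_ltr => //; exact: measurable_cst.
- by apply: measurable_funD => //; apply: measurable_funM => //; apply: measurable_funM.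
- exact: measurable_powR.
Qed.

Lemma measurable_dpsi {R : realType} (p e : R) : measurable_fun setT (dpsi p e).
Proof.
apply: measurable_fun_ifT => //.
- by apply: measurable_fun_ltr => //; exact: measurable_cst.
- by apply: measurable_funM => //; exact: measurable_powR.
Qed.

Section LebesgueBox.
Context {R : realType} {n : nat}.
Implicit Types (a b : (n.+1).-tuple R) (A : set ((n.+1).-tuple R)).

Lemma measurable_box a b :
  measurable [set x : (n.+1).-tuple R | forall i, tnth a i < tnth x i <= tnth b i].
Proof.
have -> : [set x : (n.+1).-tuple R | forall i, tnth a i < tnth x i <= tnth b i] =
    \bigcap_(i in [set: 'I_n.+1]) ((fun x => tnth x i) @^-1` `]tnth a i, tnth b i]%classic).
  apply/seteqP; split => x /=; first by move=> H i _ /=; rewrite in_itv /= H.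
  by move=> H i; have := H i I; rewrite /= in_itv.
apply: fin_bigcap_measurable; first exact: finite_finset.
move=> i _; rewrite -[X in measurable X]setTI.
by apply: measurable_tnth => //; exact: measurable_itv.
Qed.

Lemma bounded_subset_box A : bounded_set (@tvec R n @` A) -> exists a b,
  A `<=` [set x | forall i, tnth a i < tnth x i <= tnth b i].
Proof.
case=> M [_ HM]; set K := `|M| + 2.
exists [tuple - K | _ < n.+1], [tuple K | _ < n.+1] => x Ax i; rewrite !tnth_mktuple.
have : `|tnth x i| <= `|M| + 1.
  have := HM _ (ltr_pwDr ltr01 (ler_norm M)) _ (ex_intro2 _ _ x Ax erefl).
  apply: le_trans; change (`|tnth x i| <= mx_norm (tvec x)); rewrite mx_normrE.
  have -> : tnth x i = tvec x (@ord0 0, i).1 (@ord0 0, i).2 by rewrite mxE.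
  exact: le_bigmax.
by rewrite ler_norml /K => /andP[? ?]; apply/andP; split; lra.
Qed.

Lemma lebesgue_measure_bounded_lty (mu : {measure set ((n.+1).-tuple R) -> \bar R}) A :
  is_lebesgue_measure mu -> measurable A -> bounded_set (@tvec R n @` A) -> (mu A < +oo)%E.
Proof.
move=> hmu mA /bounded_subset_box[a [b sAbox]].
have box_lty : (mu [set x | forall i, (tnth a i < tnth x i <= tnth b i)%R] < +oo)%E.
  by rewrite (hmu a b) ltry.
exact: le_lt_trans (le_measure _ (mem_set mA) (mem_set (measurable_box _ _)) sAbox) box_lty.
Qed.

End LebesgueBox.

Section L2Integrable.
Context {R : realType} {n : nat} {mu : {measure set ((n.+1).-tuple R) -> \bar R}}.
Context {Om : set ((n.+1).-tuple R)}.
Hypothesis mOm : measurable Om.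
Implicit Types f g d wf hf : (n.+1).-tuple R -> R.

Lemma integrableZl_EFin (k : R) f : mu.-integrable Om (EFin \o f) ->
  mu.-integrable Om (EFin \o (fun x => k * f x)).
Proof. by move=> H; apply: eq_integrable (integrableZl mOm k H). Qed.

Lemma integrableD_EFin f g : mu.-integrable Om (EFin \o f) ->
  mu.-integrable Om (EFin \o g) -> mu.-integrable Om (EFin \o (fun x => f x + g x)).
Proof. by move=> H1 H2; apply: eq_integrable (integrableD mOm H1 H2). Qed.

Lemma Rintegral_ae_eq f g : measurable_fun Om f -> measurable_fun Om g ->
  {ae mu, forall x, Om x -> f x = g x} -> Rintegral mu Om f = Rintegral mu Om g.
Proof.
move=> mf mg fg; congr fine; apply: ae_eq_integral => //; try exact/measurable_EFinP.
by apply: filterS fg => x fg Ox; rewrite fg.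
Qed.

Hypothesis finOm : (mu Om < +oo)%E.

Lemma integrable_cst_EFin (k : R) : mu.-integrable Om (fun=> k%:E).
Proof.
apply/integrableP; split; first exact: measurable_cst.
under eq_integral do rewrite abse_EFin.
by rewrite integral_cst// lte_mul_pinfty.
Qed.

Lemma integrable_L2_sqr f : in_L2 mu Om f -> mu.-integrable Om (fun x => (f x ^+ 2)%:E).
Proof.
case=> mf fi; apply/integrableP; split; first exact/measurable_EFinP/measurable_funX.
rewrite (eq_integral (fun x => (f x ^+ 2)%:E)) // => x _.
by rewrite gee0_abs// lee_fin sqr_ge0.
Qed.

Lemma integrable_L2_dominated g f1 f2 (K1 K2 : R) : measurable_fun Om g ->
  in_L2 mu Om f1 -> in_L2 mu Om f2 ->
  (forall x, Om x -> `|g x| <= K1 + K2 * (f1 x ^+ 2 + f2 x ^+ 2)) ->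
  mu.-integrable Om (EFin \o g).
Proof.
move=> mg L2f1 L2f2 gK.
have : mu.-integrable Om
    (fun x => K1%:E + K2%:E * ((f1 x ^+ 2)%:E + (f2 x ^+ 2)%:E))%E.
  apply: integrableD (integrable_cst_EFin K1) _ => //.
  by apply: integrableZl => //; apply: integrableD => //; exact: integrable_L2_sqr.
apply: le_integrable => //; first exact/measurable_EFinP.
by move=> x Ox /=; rewrite lee_fin (le_trans (gK x Ox)) ?ler_norm.
Qed.

Lemma Rintegral_sqr_affine g d wf hf (D t : R) :
  mu.-integrable Om (EFin \o g) -> measurable_fun Om d ->
  (forall x, Om x -> `|d x| <= D) -> in_L2 mu Om wf -> in_L2 mu Om hf ->
  Rintegral mu Om (fun x => g x + d x * ((t * hf x + wf x) ^+ 2 - wf x ^+ 2)) =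
  Rintegral mu Om g + 2 * t * Rintegral mu Om (fun x => d x * (hf x * wf x))
  + t ^+ 2 * Rintegral mu Om (fun x => d x * hf x ^+ 2).
Proof.
move=> ig md dD L2w L2h; have [mw _] := L2w; have [mh _] := L2h.
have weighted (m : (n.+1).-tuple R -> R) : measurable_fun Om m ->
    (forall x, `|m x| <= hf x ^+ 2 + wf x ^+ 2) ->
    mu.-integrable Om (EFin \o (fun x => d x * m x)).
  move=> mm mK; apply: (integrable_L2_dominated _ _ _ 0 D _ L2h L2w).
    exact: measurable_funM.
  move=> x Ox; rewrite add0r normrM.
  exact: ler_pM (normr_ge0 _) (normr_ge0 _) (dD x Ox) (mK x).
have ihw : mu.-integrable Om (EFin \o (fun x => d x * (hf x * wf x))).
  apply: weighted => [|x]; first exact: measurable_funM.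
  by rewrite ler_norml; apply/andP; split; nra.
have ih : mu.-integrable Om (EFin \o (fun x => d x * hf x ^+ 2)).
  apply: weighted => [|x]; first exact: measurable_funX.
  by rewrite ger0_norm ?sqr_ge0// lerDl sqr_ge0.
have ithw := integrableZl_EFin (2 * t) _ ihw.
have ith := integrableZl_EFin (t ^+ 2) _ ih.
rewrite (@eq_Rintegral _ _ _ mu _ (fun x => g x
    + (2 * t * (d x * (hf x * wf x)) + t ^+ 2 * (d x * hf x ^+ 2)))); last first.
  by move=> x _; ring.
by rewrite -!RintegralZl// -addrA -RintegralD// RintegralD// integrableD_EFin.
Qed.

End L2Integrable.

Lemma quadratic_min_at0 (R : realFieldType) (c0 c1 c2 : R) :
  (forall t, c0 <= c0 + c1 * t + c2 * t ^+ 2) -> c1 = 0.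
Proof.
move=> c0_min; set K := `|c2| + 1.
have K0 : 0 < K by rewrite ltr_pwDr.
have c2K : c2 - K < 0 by rewrite subr_lt0 (le_lt_trans (ler_norm c2))// ltrDl.
have := c0_min (- c1 / K).
have -> : c0 + c1 * (- c1 / K) + c2 * (- c1 / K) ^+ 2 = c0 + (c1 / K) ^+ 2 * (c2 - K).
  by field; rewrite gt_eqF.
rewrite lerDl nmulr_lge0// => le0.
have : (c1 / K) ^+ 2 == 0 by rewrite eq_le le0 sqr_ge0.
by rewrite sqrf_eq0 mulf_eq0 invr_eq0 (gt_eqF K0) orbF => /eqP.
Qed.

Section LineQuadratic.
Context {R : realFieldType} {V : lmodType R}.
Implicit Types (g : V -> R) (w h : V).

Definition line_quadratic g w h (c2 : R) : Prop :=
  exists c0 c1 : R, forall t, g (t *: h + w) = c0 + c1 * t + c2 * t ^+ 2.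

Lemma line_quadratic_min g w h c2 : (forall v, g w <= g v) -> line_quadratic g w h c2 ->
  g (h + w) = g w + c2.
Proof.
move=> wmin [c0 [c1 gE]].
have gw : g w = c0 by have := gE 0; rewrite scale0r add0r => ->; ring.
have c10 : c1 = 0.
  by apply: (@quadratic_min_at0 _ c0 c1 c2) => t; rewrite -gE -gw.
by rewrite -[h]scale1r gE gw c10 expr1n; ring.
Qed.

Lemma line_quadratic_cst w h (c : R) : line_quadratic (fun=> c) w h 0.
Proof. by exists c, 0 => t; ring. Qed.

Lemma line_quadraticD g1 g2 w h a b : line_quadratic g1 w h a ->
  line_quadratic g2 w h b -> line_quadratic (fun v => g1 v + g2 v) w h (a + b).
Proof.
move=> [c0 [c1 E1]] [d0 [d1 E2]]; exists (c0 + d0), (c1 + d1) => t.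
by rewrite E1 E2; ring.
Qed.

Lemma line_quadraticZ (k : R) g w h a : line_quadratic g w h a ->
  line_quadratic (fun v => k * g v) w h (k * a).
Proof. by move=> [c0 [c1 E]]; exists (k * c0), (k * c1) => t; rewrite E; ring. Qed.

Lemma line_quadratic_shift g z w h a : line_quadratic g (w - z) h a ->
  line_quadratic (fun v => g (v - z)) w h a.
Proof. by move=> [c0 [c1 E]]; exists c0, c1 => t; rewrite -addrA E. Qed.

Lemma line_quadratic_linear (phi : V -> R) w h :
  (forall a u v, phi (a *: u + v) = a * phi u + phi v) -> line_quadratic phi w h 0.
Proof. by move=> phi_lin; exists (phi w), (phi h) => t; rewrite phi_lin; ring. Qed.

End LineQuadratic.

Lemma line_quadratic_sqr_norm {R : realType} {V : completeNormedModType R} (ip : V -> V -> R)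
    (w h : V) : is_inner_product ip ->
  line_quadratic (fun v => `|v| ^+ 2) w h (`|h| ^+ 2).
Proof.
case=> ipl ipC ipn; exists (ip w w), (2 * ip h w) => t.
rewrite !ipn ipl [ip h _]ipC [ip w _]ipC !ipl [ip w h]ipC; ring.
Qed.

Section PsiIntegral.
Context {R : realType} {n : nat} {mu : {measure set ((n.+1).-tuple R) -> \bar R}}.
Context {Om : set ((n.+1).-tuple R)}.
Hypotheses (mOm : measurable Om) (finOm : (mu Om < +oo)%E).
Variable p : R.
Hypotheses (p_gt0 : 0 < p) (p_lt1 : p < 1).
Implicit Types (e s : R) (f g : (n.+1).-tuple R -> R).

Lemma measurable_psi_sqr e f : measurable_fun Om f ->
  measurable_fun Om (fun x => psi p e (f x ^+ 2)).
Proof. by move=> mf; apply: measurableT_comp (measurable_psi _ _) (measurable_funX _ mf). Qed.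

Lemma measurable_dpsi_sqr e f : measurable_fun Om f ->
  measurable_fun Om (fun x => dpsi p e (f x ^+ 2)).
Proof. by move=> mf; apply: measurableT_comp (measurable_dpsi _ _) (measurable_funX _ mf). Qed.

Lemma psi_le_affine e s : 0 < e -> 0 <= s -> psi p e s <= psi p e 0 + dpsi p e 0 * s.
Proof. by move=> e0 s0; rewrite -[s in _ * s]subr0 psi_le_linearization. Qed.

Lemma integrable_psi_sqr e f : 0 < e -> in_L2 mu Om f ->
  mu.-integrable Om (EFin \o (fun x => psi p e (f x ^+ 2))).
Proof.
move=> e0 L2f; have [mf _] := L2f.
apply: (integrable_L2_dominated mOm finOm _ _ _ (psi p e 0) (dpsi p e 0) _ L2f L2f) => //.
  exact: measurable_psi_sqr.
move=> x _; have s0 := sqr_ge0 (f x).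
have : 0 <= dpsi p e 0 by exact: dpsi_ge0.
rewrite ger0_norm ?psi_ge0//; have := psi_le_affine _ _ e0 s0; nra.
Qed.

Lemma integrable_psi_tangent e f g : 0 < e -> in_L2 mu Om f -> in_L2 mu Om g ->
  mu.-integrable Om (EFin \o (fun x =>
    psi p e (f x ^+ 2) + dpsi p e (f x ^+ 2) * (g x ^+ 2 - f x ^+ 2))).
Proof.
move=> e0 L2f L2g; have [mf _] := L2f; have [mg _] := L2g.
apply: (integrable_L2_dominated mOm finOm _ _ _ (psi p e 0) (dpsi p e 0) _ L2f L2g) => //.
  apply: measurable_funD; first exact: measurable_psi_sqr.
  apply: measurable_funM; first exact: measurable_dpsi_sqr.
  by apply: measurable_funB; exact: measurable_funX.
move=> x _; have [A0 B0] := (sqr_ge0 (f x), sqr_ge0 (g x)).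
have concave : psi p e (g x ^+ 2) <= psi p e (f x ^+ 2)
    + dpsi p e (f x ^+ 2) * (g x ^+ 2 - f x ^+ 2) by exact: psi_le_linearization.
have psiB0 : 0 <= psi p e (g x ^+ 2) by exact: psi_ge0.
have psiA := psi_le_affine _ _ e0 A0.
have d0 : 0 <= dpsi p e (f x ^+ 2) by exact: dpsi_ge0.
have dD : dpsi p e (f x ^+ 2) <= dpsi p e 0 by exact: dpsi_le_dpsi0.
have := mulr_ge0 d0 A0; have := ler_wpM2r B0 dD.
rewrite ger0_norm; lra.
Qed.

Lemma Rintegral_psi_le_tangent e e' f g : 0 < e' -> e' <= e ->
  in_L2 mu Om f -> in_L2 mu Om g ->
  Rintegral mu Om (fun x => psi p e' (g x ^+ 2)) <=
  Rintegral mu Om (fun x => psi p e (f x ^+ 2)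
                            + dpsi p e (f x ^+ 2) * (g x ^+ 2 - f x ^+ 2)).
Proof.
move=> e'0 ee L2f L2g; have e0 : 0 < e by apply: lt_le_trans ee.
apply: le_Rintegral => //; [exact: integrable_psi_sqr|exact: integrable_psi_tangent|].
move=> x _; have [A0 B0] := (sqr_ge0 (f x), sqr_ge0 (g x)).
apply: le_trans (_ : psi p e (g x ^+ 2) <= _); first exact: psi_le_eps.
exact: psi_le_linearization.
Qed.

End PsiIntegral.

Section AlgorithmA.
Context {R : realType} {n : nat} {mu : {measure set ((n.+1).-tuple R) -> \bar R}}.
Context {Om : set ((n.+1).-tuple R)} {V : completeNormedModType R}.
Context {ip : V -> V -> R} {iota : V -> (n.+1).-tuple R -> R}.
Context {F : V -> R} {F' : V -> V -> R} {alpha beta p : R}.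
Hypotheses (mOm : measurable Om) (finOm : (mu Om < +oo)%E).
Hypothesis ip_inner : is_inner_product ip.
Hypothesis iota_L2 : forall v, in_L2 mu Om (iota v).
Hypothesis iota_linear : forall a u v,
  {ae mu, forall x, Om x -> iota (a *: u + v) x = a * iota u x + iota v x}.
Hypothesis F'_linear : forall uk a u v, F' uk (a *: u + v) = a * F' uk u + F' uk v.
Hypotheses (beta_ge0 : 0 <= beta) (p_gt0 : 0 < p) (p_lt1 : p < 1).

Implicit Types (e L : R) (uk w h : V) (g d : (n.+1).-tuple R -> R).

Local Notation Q := (Q_obj mu Om iota F F' alpha beta p).
Local Notation Phi := (Phi_eps mu Om iota F alpha beta p).

Lemma Q_obj_center e uk L : Q e uk L uk = Phi e uk.
Proof.
have F'0 : F' uk 0 = 0.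
  by have := F'_linear uk (-1) 0 0; rewrite scaler0 addr0 mulN1r addNr.
rewrite /Q_obj /Phi_eps /G_eps subrr F'0 normr0 expr0n mulr0 !addr0.
by congr (_ + _ * _); apply: eq_Rintegral => x _; rewrite subrr mulr0 addr0.
Qed.

Lemma Phi_eps_le_Q_obj e (e' : R) uk L w : 0 < e' -> e' <= e -> D_cond F F' uk L w ->
  Phi e' w <= Q e uk L w + L / 2 * `|w - uk| ^+ 2.
Proof.
move=> e'0 ee; rewrite /D_cond /Phi_eps /Q_obj /G_eps => Dw.
have := Rintegral_psi_le_tangent mOm finOm _ p_gt0 p_lt1 _ _ _ _ e'0 ee (iota_L2 uk) (iota_L2 w).
move=> /(ler_wpM2l beta_ge0); lra.
Qed.

Lemma iota_sub uk w :
  {ae mu, forall x, Om x -> iota (uk - w) x = iota uk x - iota w x}.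
Proof.
have := iota_linear (-1) w uk; rewrite scaleN1r addrC.
by apply: filterS => x iotaE Ox; rewrite iotaE// mulN1r addrC.
Qed.

Lemma line_quadratic_Rintegral g d (D : R) w h :
  mu.-integrable Om (EFin \o g) -> measurable_fun Om d ->
  (forall x, Om x -> `|d x| <= D) ->
  line_quadratic (fun v => Rintegral mu Om
      (fun x => g x + d x * (iota v x ^+ 2 - iota w x ^+ 2)))
    w h (Rintegral mu Om (fun x => d x * iota h x ^+ 2)).
Proof.
move=> ig md dD.
have mg : measurable_fun Om g by apply/measurable_EFinP; exact: measurable_int ig.
have m_iota v := (iota_L2 v).1.
exists (Rintegral mu Om g), (2 * Rintegral mu Om (fun x => d x * (iota h x * iota w x))).
move=> t; rewrite (@Rintegral_ae_eq _ _ _ _ mOm _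
  (fun x => g x + d x * ((t * iota h x + iota w x) ^+ 2 - iota w x ^+ 2))).
- by rewrite (Rintegral_sqr_affine mOm finOm _ _ _ _ _ _ ig md dD (iota_L2 w) (iota_L2 h)); ring.
- apply: measurable_funD => //; apply: measurable_funM => //.
  by apply: measurable_funB; exact: measurable_funX.
- apply: measurable_funD => //; apply: measurable_funM => //.
  apply: measurable_funB; apply: measurable_funX => //.
  by apply: measurable_funD => //; exact: measurable_funM.
- by apply: filterS (iota_linear t h w) => x iotaE Ox; rewrite iotaE.
Qed.

Lemma Q_obj_line_quadratic e uk L w : 0 < e ->
  line_quadratic (Q e uk L) w (uk - w)
    ((L / 2 + alpha / 2) * `|uk - w| ^+ 2 + beta * Rintegral mu Om
       (fun x => dpsi p e (iota uk x ^+ 2) * (iota w x - iota uk x) ^+ 2)).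
Proof.
move=> e0; set d := fun x => dpsi p e (iota uk x ^+ 2).
have md : measurable_fun Om d by apply: measurable_dpsi_sqr; exact: (iota_L2 uk).1.
have dD x : Om x -> `|d x| <= dpsi p e 0.
  by move=> _; rewrite ger0_norm ?dpsi_ge0// dpsi_le_dpsi0// sqr_ge0.
have m_iota v := (iota_L2 v).1.
have -> : Rintegral mu Om (fun x => d x * (iota w x - iota uk x) ^+ 2) =
          Rintegral mu Om (fun x => d x * iota (uk - w) x ^+ 2).
  apply: Rintegral_ae_eq => //.
  - by apply: measurable_funM => //; apply/measurable_funX/measurable_funB.
  - exact/measurable_funM/measurable_funX.
  - by apply: filterS (iota_sub uk w) => x iotaE Ox; rewrite iotaE// -opprB sqrrN.
set tangent := fun x => psi p e (iota uk x ^+ 2) + d x * (iota w x ^+ 2 - iota uk x ^+ 2).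
have -> : Q e uk L = fun v => F uk + F' uk (v - uk) + L / 2 * `|v - uk| ^+ 2
    + alpha / 2 * `|v| ^+ 2
    + beta * Rintegral mu Om (fun x => tangent x + d x * (iota v x ^+ 2 - iota w x ^+ 2)).
  apply: funext => v; rewrite /Q_obj; congr (_ + _ * _).
  by apply: eq_Rintegral => x _; rewrite /tangent /d; ring.
rewrite (_ : (L / 2 + alpha / 2) * _ + _ =
  0 + 0 + L / 2 * `|uk - w| ^+ 2 + alpha / 2 * `|uk - w| ^+ 2
  + beta * Rintegral mu Om (fun x => d x * iota (uk - w) x ^+ 2)); last by ring.
apply: line_quadraticD; first apply: line_quadraticD; first apply: line_quadraticD.
- apply: line_quadraticD; first exact: line_quadratic_cst.
  by apply: line_quadratic_shift; apply: line_quadratic_linear.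
- apply: line_quadraticZ; apply: (line_quadratic_shift (fun v => `|v| ^+ 2)).
  exact: line_quadratic_sqr_norm _ _ _ ip_inner.
- apply: line_quadraticZ; exact: line_quadratic_sqr_norm _ _ _ ip_inner.
apply: line_quadraticZ; apply: line_quadratic_Rintegral dD => //.
exact: integrable_psi_tangent.
Qed.
End AlgorithmA.

Theorem lemma7p3 (R : realType) (n : nat)
  (Om : set ((n.+1).-tuple R))
  (mu : {measure set ((n.+1).-tuple R) -> \bar R})
  (V : completeNormedModType R) (ip : V -> V -> R)
  (iota : V -> (n.+1).-tuple R -> R)
  (F : V -> R) (F' : V -> V -> R) (alpha beta p : R)
  (eps : nat -> R) (gam Lt : R) (Lk : nat -> R) (u : nat -> V) :
  bounded_lipschitz_domain Om ->
  measurable Om ->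
  is_lebesgue_measure mu ->
  is_inner_product ip ->
  compact_dense_embedding mu Om iota ->
  standing_F F F' ->
  0 < alpha -> 0 < beta -> 0 < p < 1 ->
  assumption_I_F F' ->
  (forall k, 0 < eps k) ->
  (forall k, eps k.+1 <= eps k) ->
  eps @ \oo --> 0 ->
  1 < gam -> 0 < Lt ->
  algorithmA mu Om iota F F' alpha beta p eps gam Lt Lk u ->
  forall k,
    Phi_eps mu Om iota F alpha beta p (eps k.+1) (u k.+1)
    + alpha / 2 * `|u k.+1 - u k| ^+ 2
    + beta * Rintegral mu Om
        (fun x => dpsi p (eps k) (iota (u k) x ^+ 2) * (iota (u k.+1) x - iota (u k) x) ^+ 2)
    <= Phi_eps mu Om iota F alpha beta p (eps k) (u k).
Proof.
(* Of Algorithm A only the minimality of u_{k+1} and (D_{k,L}) enter; the other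
   assumptions serve the well-posedness of the scheme. *)
move=> dom mOm leb ip_inner [iota_L2 iota_lin _ _ _] [_ _ F'_diff _] _ beta0
  /andP[p0 p1] _ eps0 eps_decr _ _ _ alg k.
have finOm : (mu Om < +oo)%E.
  by case: dom => _ _ _ bounded _; exact: lebesgue_measure_bounded_lty.
have F'_linear uk : forall a v w, F' uk (a *: v + w) = a * F' uk v + F' uk w.
  exact: (F'_diff uk).1.1.
have [_ u1_min D_k _] := alg k.
have := line_quadratic_min _ _ _ _ u1_min
  (Q_obj_line_quadratic mOm finOm ip_inner iota_L2 iota_lin F'_linear p0 p1 _ _ _ _ (eps0 k)).
rewrite subrK Q_obj_center// distrC => Phi_k.
have := Phi_eps_le_Q_obj (alpha := alpha) mOm finOm iota_L2 (ltW beta0) p0 p1 _ _ _ _ _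
  (eps0 k.+1) (eps_decr k) D_k.
lra.
Qed.
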